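(* Let $A = A_s + A_i\epsilon\in\mathbb{DR}^{m\times n}$ with $m\ge n$ and $A_s$ of full column rank, and let $A_sP_s = Q_sR_s$ where $P_s\in\mathbb{R}^{n\times n}$ is a permutation matrix, $Q_s\in\mathbb{R}^{m\times n}$ has orthonormal columns and $R_s=(r_{s_{ij}})\in\mathbb{R}^{n\times n}$ is upper triangular and nonsingular. Put $B = Q_s^{\top}A_iP_s=[b_1,\dots,b_n]$. Define $P\in\mathbb{R}^{n\times n}$ with zero diagonal, strictly lower triangular part $$p_1(2{:}n) = b_1(2{:}n)/r_{s_{11}},\qquad p_k(k{+}1{:}n) = \Big(b_k(k{+}1{:}n) - \sum_{t=1}^{k-1} r_{s_{tk}}\,p_t(k{+}1{:}n)\Big)\Big/r_{s_{kk}},\quad k=2,\dots,n-1,$$ and $P^{\top}=-P$. Set $Q_i = (I_m - Q_sQ_s^{\top})A_iP_sR_s^{-1} + Q_sP$ and $R_i = Q_s^{\top}A_iP_s - PR_s$. Then $Q=Q_s+Q_i\epsilon$ satisfies $Q^{\top}Q=I_n$, $R = R_s+R_i\epsilon$ is upper triangular, and $AP_s = QR$.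
   Context: A dual number is $a = a_s + a_i\epsilon$ with $a_s,a_i\in\mathbb{R}$, where $\epsilon^2=0$, $\epsilon\neq 0$; $\mathbb{DR}^{m\times n}$ denotes the set of dual matrices $A = A_s + A_i\epsilon$ with $A_s, A_i\in\mathbb{R}^{m\times n}$. Products use $\epsilon^2=0$: $(A_s+A_i\epsilon)(B_s+B_i\epsilon) = A_sB_s + (A_sB_i + A_iB_s)\epsilon$. The transpose is $A^{\top}=A_s^{\top}+A_i^{\top}\epsilon$. A dual matrix is upper triangular if both parts are upper triangular. For a vector $v$, $v(a{:}b)$ is the subvector of entries $a$ through $b$. *)

From HB Require Import structures.
From mathcomp Require Import all_boot all_order all_algebra all_fingroup.
Set Implicit Arguments. Unset Strict Implicit. Unset Printing Implicit Defensive.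
Import Order.TTheory GRing.Theory Num.Theory.
Local Open Scope ring_scope.

(* Dual matrices A = A_s + A_i eps, represented as the pair (A_s, A_i). *)
Definition dmx (R : Type) m n := ('M[R]_(m, n) * 'M[R]_(m, n))%type.

Section Dual.
Variable R : pzRingType.

Definition dreal m n (M : 'M[R]_(m, n)) : dmx R m n := (M, 0).

(* (A_s + A_i eps)(B_s + B_i eps) = A_s B_s + (A_s B_i + A_i B_s) eps *)
Definition dmulmx m n p (A : dmx R m n) (B : dmx R n p) : dmx R m p :=
  (A.1 *m B.1, A.1 *m B.2 + A.2 *m B.1).

Definition dtrmx m n (A : dmx R m n) : dmx R n m := (A.1^T, A.2^T).

Definition upper_mx m n (M : 'M[R]_(m, n)) : Prop :=
  forall (i : 'I_m) (j : 'I_n), (j < i)%N -> M i j = 0.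

Definition dupper m n (A : dmx R m n) : Prop := upper_mx A.1 /\ upper_mx A.2.
End Dual.

Section Pmat.
Variable R : fieldType.
Variable n : nat.

(* nat-indexed access to a square matrix (0 outside the range) *)
Definition mxn (M : 'M[R]_n) (i j : nat) : R :=
  match @insub _ (fun k => (k < n)%N) 'I_n i, @insub _ (fun k => (k < n)%N) 'I_n j with
  | Some i', Some j' => M i' j'
  | _, _ => 0
  end.

(* For a fixed (0-based) row index j, pcolfun B Rs j k t is the entry
   p_t(j) (column t, row j) for t < k, computed by the recursion
   p_k(j) = (b_k(j) - \sum_{t<k} r_{tk} p_t(j)) / r_{kk}. *)
Fixpoint pcolfun (B Rs : 'M[R]_n) (j : nat) (k : nat) : nat -> R :=
  match k with
  | 0 => fun _ => 0
  | k'.+1 =>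
      let g := pcolfun B Rs j k' in
      fun t => if t == k' then
                 (mxn B j k' - \sum_(t' < k') mxn Rs t' k' * g t') / mxn Rs k' k'
               else g t
  end.

(* strictly lower entry p_{jk} (row j, column k, j > k), 0-based *)
Definition plow (B Rs : 'M[R]_n) (j k : nat) : R := pcolfun B Rs j k.+1 k.

Definition Pmx (B Rs : 'M[R]_n) : 'M[R]_n :=
  \matrix_(i, j) if (j < i)%N then plow B Rs i j
                 else if (i < j)%N then - plow B Rs j i else 0.
End Pmat.

From HB Require Import structures.
From mathcomp Require Import all_boot all_order all_algebra all_fingroup.
Import Order.TTheory GRing.Theory Num.Theory.
Local Open Scope ring_scope.

(* With [E := Q_s^T Q_i], the dual conditions read [Q_s^T Q_s = I] and
   [E^T + E = 0]; the correction [Q_s P] makes [E = P], skew by construction.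
   The dual part of [A P_s = Q R] is then forced to be [R_i = B - P R_s], and
   the recursion defining [P] is exactly forward substitution solving
   [(P R_s)_{jk} = b_{jk}] for [j > k], so that [R_i] is upper triangular.  The rank, size and permutation
   hypotheses only guarantee that the given QR factorization exists. *)

Section DualOrthonormal.
Variables (R : comPzRingType) (m n : nat).

Lemma dmul_trmx_self_eq1 (Qs Qi : 'M[R]_(m, n)) :
  Qs^T *m Qs = 1%:M -> (Qs^T *m Qi)^T = - (Qs^T *m Qi) ->
  dmulmx (dtrmx (Qs, Qi)) (Qs, Qi) = dreal 1%:M.
Proof.
move=> QsQs skew; rewrite /dmulmx /dreal /=; congr pair => //.
by rewrite -[Qi^T *m Qs]trmxK trmx_mul trmxK skew addrN.
Qed.

Lemma trmx_mul_orth_correction (Qs : 'M[R]_(m, n)) (X : 'M[R]_(m, n))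
    (P : 'M[R]_n) :
  Qs^T *m Qs = 1%:M -> Qs^T *m ((1%:M - Qs *m Qs^T) *m X + Qs *m P) = P.
Proof.
move=> QsQs; rewrite mulmxDr !mulmxA mulmxBr mulmx1 !mulmxA QsQs.
by rewrite !mul1mx subrr mul0mx add0r.
Qed.

End DualOrthonormal.

Lemma mul_orth_correction (R : comUnitRingType) m n (Qs X : 'M[R]_(m, n))
    (Rs P : 'M[R]_n) :
  Rs \in unitmx ->
  Qs *m (Qs^T *m X - P *m Rs)
    + ((1%:M - Qs *m Qs^T) *m X *m invmx Rs + Qs *m P) *m Rs = X.
Proof.
move=> uRs; rewrite mulmxDl -mulmxA mulVmx // mulmx1 mulmxBr mulmxBl mul1mx.
by rewrite !mulmxA addrACA addNr addr0 addrCA subrr addr0.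
Qed.

Lemma upper_unitmx_diag_neq0 (R : fieldType) n (M : 'M[R]_n) (k : 'I_n) :
  upper_mx M -> M \in unitmx -> M k k != 0.
Proof.
move=> upM; rewrite unitmxE unitfE -det_tr det_trig.
  by rewrite (bigD1 k) //= mulf_eq0 negb_or mxE => /andP[].
by apply/is_trig_mxP => i j ltij; rewrite mxE upM.
Qed.

Section Pmx.
Variables (R : fieldType) (n : nat) (B Rs : 'M[R]_n).

Lemma mxnE (M : 'M[R]_n) (i j : 'I_n) : mxn M i j = M i j.
Proof. by rewrite /mxn !valK. Qed.

Lemma pcolfun_plow j k t : (t < k)%N -> pcolfun B Rs j k t = plow B Rs j t.
Proof.
elim: k => [//|k IHk] lttk /=.
case: eqP => [->|/eqP neq_tk]; first by rewrite /plow /= eqxx.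
by apply: IHk; rewrite ltn_neqAle neq_tk -ltnS.
Qed.

Lemma plowE j k :
  plow B Rs j k =
    (mxn B j k - \sum_(t < k) plow B Rs j t * mxn Rs t k) / mxn Rs k k.
Proof.
rewrite {1}/plow /= eqxx; congr ((_ - _) / _).
by apply: eq_bigr => t _; rewrite mulrC pcolfun_plow.
Qed.

Lemma trmx_Pmx : (Pmx B Rs)^T = - Pmx B Rs.
Proof.
apply/matrixP => i j; rewrite !mxE.
by case: (ltngtP i j) => _; rewrite ?opprK ?oppr0.
Qed.

Hypothesis upRs : upper_mx Rs.

Lemma mulmx_Pmx_lower (j k : 'I_n) : (k < j)%N ->
  (Pmx B Rs *m Rs) j k = \sum_(t < k.+1) plow B Rs j t * mxn Rs t k.
Proof.
move=> ltkj; rewrite mxE (big_ord_widen n (fun t => plow B Rs j t * mxn Rs t k))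
  ?(ltnW (ltn_ord k)) // [RHS]big_mkcond /=.
apply: eq_bigr => t _; rewrite mxE mxnE.
case: (ltnP t k.+1) => [letk | lttk]; first by rewrite (leq_trans letk ltkj).
by rewrite upRs ?mulr0.
Qed.

Lemma upper_sub_mulmx_Pmx : Rs \in unitmx -> upper_mx (B - Pmx B Rs *m Rs).
Proof.
move=> uRs j k ltkj.
rewrite mxE [X in _ + X]mxE.
rewrite mulmx_Pmx_lower // big_ord_recr /= plowE.
rewrite mulfVK ?mxnE ?upper_unitmx_diag_neq0 //.
by rewrite addrCA subrr addr0 subrr.
Qed.

End Pmx.

Theorem mainTheorem4 (R : realFieldType) (m n : nat)
  (As Ai : 'M[R]_(m, n)) (Ps : 'M[R]_n) (Qs : 'M[R]_(m, n)) (Rs : 'M[R]_n) :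
  (n <= m)%N ->
  \rank As = n ->
  is_perm_mx Ps ->
  Qs^T *m Qs = 1%:M ->
  upper_mx Rs -> Rs \in unitmx ->
  As *m Ps = Qs *m Rs ->
  let B := Qs^T *m Ai *m Ps in
  let P := Pmx B Rs in
  let Qi := (1%:M - Qs *m Qs^T) *m Ai *m Ps *m invmx Rs + Qs *m P in
  let Ri := Qs^T *m Ai *m Ps - P *m Rs in
  let Q : dmx R m n := (Qs, Qi) in
  let Rd : dmx R n n := (Rs, Ri) in
  let A : dmx R m n := (As, Ai) in
  dmulmx (dtrmx Q) Q = dreal 1%:M /\
  dupper Rd /\
  dmulmx A (dreal Ps) = dmulmx Q Rd.
Proof.
move=> _ _ _ QsQs upRs uRs AsPs B P Qi Ri Q Rd A.
have QsQi : Qs^T *m Qi = P.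
  by rewrite /Qi -!mulmxA trmx_mul_orth_correction.
split; first by apply: dmul_trmx_self_eq1; rewrite // QsQi trmx_Pmx.
split; first by split; last exact: upper_sub_mulmx_Pmx.
rewrite /dmulmx /dreal /= mulmx0 add0r AsPs; congr pair.
by rewrite /Ri /Qi -!(mulmxA _ Ai Ps) mul_orth_correction.
Qed.
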